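(* Suppose the relationship network on $V$ is fixed and known to the designer. For a distinguished agent $k\in V$ define the mechanism $g^{2,k}$ by, for $i\in V\setminus\{k\}$, $$g^{2,k}_i(\mathbf m)=\begin{cases}\dfrac{1}{|\mathrm{posE}(\mathbf m_{E_i\cap E_k})\setminus\{k\}|}, & \text{if } i\in \mathrm{posE}(\mathbf m_{E_k}),\\[2mm] 0,&\text{otherwise,}\end{cases}\qquad g^{2,k}_k(\mathbf m)=1-\sum_{i\in V\setminus\{k\}}g^{2,k}_i(\mathbf m).$$ Then for every $k\in V$, $g^{2,k}$ is valid and DSIC. Moreover, if the Intersection Condition E(k) holds, i.e. $E_i\cap E_j\cap E_k\neq\varnothing$ for all $i,j\in V\setminus\{k\}$ (including $i=j$), then $g^{2,k}$ is efficient.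
   Context: Let $V=\{1,\dots,n\}$ be a finite set of agents. A relationship network on $V$ assigns to every unordered pair of distinct agents exactly one of three symmetric relations: friends, enemies, or impartial. For $i\in V$, $F_i,E_i,I_i$ denote the sets of friends, enemies and impartials of $i$; they partition $V\setminus\{i\}$, and $j\in F_i\iff i\in F_j$ (similarly for $E$ and $I$). A set $N\subseteq V$ is the set of needy agents. Preferences: fix weights $w_f,w_e>0$. For $p,p'\in[0,1]^V$, $p\succ_i p'$ iff either $p_i>p'_i$, or $p_i=p'_i$ and $w_f\sum_{j\in F_i}(p_j-p'_j)-w_e\sum_{j\in E_i}(p_j-p'_j)>0$; $p\succsim_i p'$ means not $p'\succ_i p$. Known-network setting: each agent $i$ sends a message $m_i\subseteq V$ (the set of agents $i$ reports as needy; $j\in m_i$ is a positive vote of $i$ on $j$). A message profile is $\mathbf m=(m_i)_{i\in V}$; for $X\subseteq V$, $\mathbf m_X=(m_j)_{j\in X}$. A mechanism is a function $g:(2^V)^V\to[0,1]^V$; it is valid if $\sum_{i\in V}g_i(\mathbf m)\le 1$ for all $\mathbf m$; it is DSIC if for all $i\in V$, all profiles $\mathbf m$ and all $m'_i\subseteq V$, $g(\mathbf m)\succsim_i g(m'_i,\mathbf m_{-i})$; it is efficient if for every nonempty $N\subseteq V$, at the truthful profile $\mathbf m$ with $m_j=N$ for all $j$, $\sum_{i\in N}g_i(\mathbf m)=1$. For $X\subseteq V$, $\mathrm{posE}(\mathbf m_X)$ is the set of agents $j\in V$ such that $j\in m_l$ for every $l\in X\cap E_j$ (i.e. $j$ receives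 positive votes from all its enemies in $X$). *)

From mathcomp Require Import all_boot all_order all_algebra.
Set Implicit Arguments. Unset Strict Implicit. Unset Printing Implicit Defensive.
Import Order.TTheory GRing.Theory Num.Theory.
Local Open Scope ring_scope.

Inductive relation3 := Friends | Enemies | Impartial.

Definition is_friends (r : relation3) : bool :=
  if r is Friends then true else false.
Definition is_enemies (r : relation3) : bool :=
  if r is Enemies then true else false.

(* Agents are 'I_n; a network is a symmetric map net : 'I_n -> 'I_n -> relation3
   (its values on the diagonal are irrelevant). *)
Definition symmetric_network n (net : 'I_n -> 'I_n -> relation3) :=
  forall i j, net i j = net j i.

Definition Fr n (net : 'I_n -> 'I_n -> relation3) (i : 'I_n) : {set 'I_n} :=
  [set j | (j != i) && is_friends (net i j)].
Definition En n (net : 'I_n -> 'I_n -> relation3) (i : 'I_n) : {set 'I_n} :=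
  [set j | (j != i) && is_enemies (net i j)].

(* A message profile: each agent reports a set of agents as needy. *)
Definition profile n := 'I_n -> {set 'I_n}.

Definition upd n (m : profile n) (i : 'I_n) (mi : {set 'I_n}) : profile n :=
  fun j => if j == i then mi else m j.

Definition posE n (net : 'I_n -> 'I_n -> relation3) (m : profile n)
  (X : {set 'I_n}) : {set 'I_n} :=
  [set j | [forall l in X :&: En net j, j \in m l]].

Definition g2_other {R : realFieldType} n (net : 'I_n -> 'I_n -> relation3)
  (k : 'I_n) (m : profile n) (i : 'I_n) : R :=
  if i \in posE net m (En net k)
  then 1 / (#|posE net m (En net i :&: En net k) :\ k|%:R)
  else 0.

Definition g2 {R : realFieldType} n (net : 'I_n -> 'I_n -> relation3)
  (k : 'I_n) (m : profile n) (i : 'I_n) : R :=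
  if i == k then 1 - \sum_(j | j != k) g2_other net k m j
  else g2_other net k m i.

Definition is_mechanism {R : realFieldType} n (g : profile n -> 'I_n -> R) :=
  forall m i, 0 <= g m i <= 1.

Definition valid {R : realFieldType} n (g : profile n -> 'I_n -> R) :=
  forall m, \sum_i g m i <= 1.

Definition spref {R : realFieldType} n (wf we : R)
  (net : 'I_n -> 'I_n -> relation3) (i : 'I_n) (p p' : 'I_n -> R) : Prop :=
  p' i < p i \/
  (p i = p' i /\
   0 < wf * (\sum_(j in Fr net i) (p j - p' j))
       - we * (\sum_(j in En net i) (p j - p' j))).

Definition DSIC {R : realFieldType} n (wf we : R)
  (net : 'I_n -> 'I_n -> relation3) (g : profile n -> 'I_n -> R) :=
  forall (i : 'I_n) (m : profile n) (mi : {set 'I_n}),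
    ~ spref wf we net i (g (upd m i mi)) (g m).

Definition efficient {R : realFieldType} n (g : profile n -> 'I_n -> R) :=
  forall N : {set 'I_n}, N != set0 ->
    \sum_(i in N) g (fun _ => N) i = 1.

Definition intersection_condition n (net : 'I_n -> 'I_n -> relation3) (k : 'I_n) :=
  forall i j : 'I_n, i != k -> j != k ->
    En net i :&: En net j :&: En net k != set0.

(** Truthfulness: a report of agent [i] only enters the condition "all enemies
    in X voted for j" for enemies [j] of [i], so [i]'s message can change
    only the shares of its own enemies and, through the residual, of [k].
    Since the shares always sum to one, the enemies' total cannot move while
    [i]'s own share and its friends' shares stay fixed, so no deviation is
    strictly preferred.  Validity: every agent of [posE(m_{E_k}) \ k] gets at
    most [1/|posE(m_{E_k}) \ k|] because [posE] is antitone in the voter set.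
    Efficiency: under E(k) every relevant voter set contains an enemy of each
    candidate, so at the truthful profile [posE] selects exactly the needy
    agents and the [1/|N \ k|] shares exhaust the unit. *)
From mathcomp Require Import all_boot all_order all_algebra.
Import Order.TTheory GRing.Theory Num.Theory.
Local Open Scope ring_scope.

Section PosE.

Context {n : nat} {net : 'I_n -> 'I_n -> relation3}.
Implicit Types (m : profile n) (i j : 'I_n) (mi N X Y : {set 'I_n}).

Lemma En_sym : symmetric_network net ->
  forall i j, (i \in En net j) = (j \in En net i).
Proof. by move=> Hs i j; rewrite !inE eq_sym Hs. Qed.

Lemma notin_En_self i : i \notin En net i.
Proof. by rewrite inE eqxx. Qed.

Lemma posE_upd_notin m i mi X :
  i \notin X -> posE net (upd m i mi) X = posE net m X.
Proof.
move=> HiX; apply/setP => j; rewrite !inE; apply: eq_forallb => l.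
by rewrite /upd; case: (l =P i) => [->|//]; rewrite inE (negbTE HiX).
Qed.

Lemma mem_posE_upd_notin_En m i mi X j :
  i \notin En net j -> (j \in posE net (upd m i mi) X) = (j \in posE net m X).
Proof.
move=> HiE; rewrite !inE; apply: eq_forallb => l.
by rewrite /upd; case: (l =P i) => [->|//]; rewrite inE (negbTE HiE) andbF.
Qed.

Lemma posE_antimono m X Y : X \subset Y -> posE net m Y \subset posE net m X.
Proof.
move=> sXY; apply/subsetP => j; rewrite !inE => /forall_inP HY.
apply/forall_inP => l; rewrite inE => /andP [HlX HlE]; apply: HY.
by rewrite inE (subsetP sXY _ HlX).
Qed.

Lemma mem_posE_const N X j :
  (j \in posE net (fun _ => N) X) = (j \in N) || (X :&: En net j == set0).
Proof.
rewrite inE; case: (boolP (j \in N)) => HjN /=.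
  by apply/forall_inP.
apply/forall_inP/eqP => [Hno | -> l]; last by rewrite inE.
by apply/setP => l; rewrite in_set0; apply/negbTE/negP => /Hno.
Qed.

End PosE.

Section Mechanism.

Variables (R : realFieldType) (n : nat) (net : 'I_n -> 'I_n -> relation3).
Variable k : 'I_n.
Implicit Types (m : profile n) (i j : 'I_n) (mi : {set 'I_n}).

Local Notation g2o := (g2_other (R:=R) net k).
Local Notation g := (g2 (R:=R) net k).

Lemma inv_nat_ge0_le1 (x : nat) : 0 <= 1 / (x%:R : R) <= 1.
Proof.
rewrite div1r; case: x => [|x]; first by rewrite invr0 lexx ler01.
by rewrite invr_ge0 ler0n /= invr_le1 ?unitfE ?pnatr_eq0 // ler1n.
Qed.

Lemma g2_other_ge0_le1 m i : 0 <= g2o m i <= 1.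
Proof. by rewrite /g2_other; case: ifP => _; rewrite ?lexx ?ler01 ?inv_nat_ge0_le1. Qed.

Lemma g2_other_le_inv_card m i : i != k ->
  g2o m i <= if i \in posE net m (En net k) :\ k
             then (#|posE net m (En net k) :\ k|%:R)^-1 else 0.
Proof.
move=> Hik; rewrite /g2_other in_setD1 Hik /=; case: ifP => // HiP.
set S := posE net m (En net k) :\ k.
have HiS : i \in S by rewrite in_setD1 Hik HiP.
have S_sub : S \subset posE net m (En net i :&: En net k) :\ k.
  by apply/setSD/posE_antimono/subsetIr.
have S_gt0 : (0 < #|S|)%N by rewrite card_gt0; apply/set0Pn; exists i.
have S_le := subset_leq_card S_sub.
rewrite div1r ler_pV2 ?inE ?unitfE ?pnatr_eq0 -?lt0n ?ltr0n ?S_gt0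
  ?(leq_trans S_gt0 S_le) //.
by rewrite ler_nat.
Qed.

Lemma sum_g2_other_le1 m : \sum_(j | j != k) g2o m j <= 1.
Proof.
set S := posE net m (En net k) :\ k.
apply: le_trans (ler_sum _ (g2_other_le_inv_card m)) _.
rewrite -big_mkcondr /= (eq_bigl (mem S)); last first.
  by move=> j; rewrite /= in_setD1 andbA andbb.
rewrite sumr_const; case: #|S| => [|s]; first by rewrite mulr0n ler01.
by rewrite -(mulr_natr (s.+1%:R : R)^-1) mulVf ?pnatr_eq0.
Qed.

Lemma g2_mechanism : is_mechanism g.
Proof.
move=> m i; rewrite /g2; case: ifP => _; last exact: g2_other_ge0_le1.
have sum_ge0 : 0 <= \sum_(j | j != k) g2o m j.
  by apply: sumr_ge0 => j _; case/andP: (g2_other_ge0_le1 m j).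
by rewrite subr_ge0 sum_g2_other_le1 lerBlDr lerDl.
Qed.

Lemma sum_g2 m : \sum_i g m i = 1.
Proof.
rewrite (bigD1 k) //= {1}/g2 eqxx (eq_bigr (g2o m)) ?subrK //.
by move=> i Hik; rewrite /g2 (negbTE Hik).
Qed.

Lemma g2_other_upd_notin_En m i mi j :
  i \notin En net j -> g2o (upd m i mi) j = g2o m j.
Proof.
move=> HiE; rewrite /g2_other mem_posE_upd_notin_En // posE_upd_notin //.
by rewrite inE (negbTE HiE).
Qed.

Lemma g2_other_upd_notin_Ek m i mi j :
  i \notin En net k -> g2o (upd m i mi) j = g2o m j.
Proof.
by move=> HiE; rewrite /g2_other !posE_upd_notin // inE (negbTE HiE) andbF.
Qed.

Lemma g2_upd_notin_En m i mi j : symmetric_network net ->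
  j \notin En net i -> g (upd m i mi) j = g m j.
Proof.
move=> Hs; rewrite (En_sym Hs) => HiE; rewrite /g2; case: (j =P k) => [Ejk|_].
  rewrite Ejk in HiE; congr (_ - _); apply: eq_bigr => l _.
  exact: g2_other_upd_notin_Ek.
exact: g2_other_upd_notin_En.
Qed.

Lemma g2_DSIC (wf we : R) : symmetric_network net -> DSIC wf we net g.
Proof.
move=> Hs i m mi; set m' := upd m i mi.
have unchanged j : j \notin En net i -> g m' j - g m j = 0.
  by move=> HjE; rewrite g2_upd_notin_En // subrr.
have friends0 : \sum_(j in Fr net i) (g m' j - g m j) = 0.
  apply: big1 => j; rewrite inE => /andP [_ Hf]; apply: unchanged.
  by rewrite inE negb_and; move: Hf; case: (net i j); rewrite ?orbT.
have enemies0 : \sum_(j in En net i) (g m' j - g m j) = 0.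
  have := sumrB (index_enum 'I_n) xpredT (g m') (g m).
  rewrite !sum_g2 subrr (bigID (mem (En net i))) /=.
  by rewrite [X in _ + X]big1 ?addr0 // => j /unchanged.
case=> [|[_]]; first by rewrite g2_upd_notin_En ?notin_En_self ?ltxx.
by rewrite friends0 enemies0 !mulr0 subrr ltxx.
Qed.

Lemma g2_truthful (N : {set 'I_n}) i : intersection_condition net k ->
  i != k -> g (fun _ => N) i = if i \in N then (#|N :\ k|%:R)^-1 else 0.
Proof.
move=> IC Hik.
have enemies_k : i \in posE net (fun _ => N) (En net k) = (i \in N).
  rewrite mem_posE_const; have := IC i i Hik Hik.
  by rewrite setIid setIC => /negbTE ->; rewrite orbF.
have pair : posE net (fun _ => N) (En net i :&: En net k) :\ k = N :\ k.
  apply/setP => l; rewrite !in_setD1; case: (boolP (l == k)) => //= Hlk.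
  by rewrite mem_posE_const setIC setIA (negbTE (IC l i Hlk Hik)) orbF.
by rewrite /g2 (negbTE Hik) /g2_other enemies_k pair div1r.
Qed.

Lemma g2_efficient : intersection_condition net k -> efficient g.
Proof.
move=> IC N /set0Pn [i0 Hi0]; set m := fun _ : 'I_n => N.
case: (boolP (k \in N)) => HkN.
  rewrite -(sum_g2 m) [RHS](bigID (mem N)) /= [X in _ + X]big1 ?addr0 //.
  move=> i HiN; rewrite g2_truthful ?(negbTE HiN) //.
  by apply: contraNneq HiN => ->.
have Nk : N :\ k = N by apply/setDidPl; rewrite disjoint_sym disjoints1.
rewrite (eq_bigr (fun=> (#|N|%:R : R)^-1)); last first.
  by move=> i HiN; rewrite g2_truthful ?HiN ?Nk //; apply: contraNneq HkN => <-.
rewrite sumr_const -(mulr_natr (#|N|%:R : R)^-1) mulVf // pnatr_eq0 -lt0n card_gt0.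
by apply/set0Pn; exists i0.
Qed.

End Mechanism.

Theorem theorem2 (R : realFieldType) (n : nat) (wf we : R)
  (net : 'I_n -> 'I_n -> relation3) (k : 'I_n) :
  symmetric_network net -> 0 < wf -> 0 < we ->
  [/\ is_mechanism (g2 (R:=R) net k),
      valid (g2 (R:=R) net k),
      DSIC wf we net (g2 net k)
    & (intersection_condition net k -> efficient (g2 (R:=R) net k))].
Proof.
move=> Hs _ _; split.
- exact: g2_mechanism.
- by move=> m; rewrite sum_g2.
- exact: g2_DSIC.
- exact: g2_efficient.
Qed.
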